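(* Let $I\subset\mathbb R$ be an open interval, $f_l,f_r:I\to\mathbb R$ continuously differentiable, $u_l,u_r\in\mathbb R$, and $f:=f_l+f_r+u_r-u_l$. Suppose $p^*\in I$ satisfies $f(p^* )=0$ and $f'(p^* )\ne0$, and set $u^*:=\frac12\big(u_l+u_r+f_r(p^* )-f_l(p^* )\big)$. Let $\eta\in(0,1)$. Then there exists $\epsilon>0$ such that the following holds. Let real sequences $(p_n),(F_{n,l}),(F_{n,r}),(F'_{n,l}),(F'_{n,r})$ be given, and set $F_n:=F_{n,l}+F_{n,r}+u_r-u_l$, $F'_n:=F'_{n,l}+F'_{n,r}$, with $F'_n\ne0$ and $$p_{n+1}=p_n-\frac{F_n}{F'_n},\qquad u_n=\tfrac12\big(u_l+u_r+F_{n,r}-F_{n,l}\big).$$ Assume $|p_0-p^*|\le\epsilon$, the sequence $(F'_n)$ is bounded, and for every $n$ with $p_n\in I$ and each $k\in\{l,r\}$, $$|F_{n,k}-f_k(p_n)|\le\tfrac16\eta|F_n|,\qquad |F'_{n,k}-f_k'(p_n)|\le\tfrac16\eta|F'_n|.$$ Then $p_n\to p^*$ and $u_n\to u^*$. *)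

From Stdlib Require Import Reals.
Open Scope R_scope.

(* An open interval of R: a nonempty-or-not open, convex subset of R
   (this covers bounded and unbounded open intervals). *)
Definition is_open_interval (I : R -> Prop) : Prop :=
  (forall x y z, I x -> I z -> x <= y <= z -> I y) /\
  (forall x, I x -> exists d, 0 < d /\ forall y, Rabs (y - x) < d -> I y).

Definition C1_on (I : R -> Prop) (g g' : R -> R) : Prop :=
  forall x, I x -> derivable_pt_lim g x (g' x) /\ continuity_pt g' x.

From Stdlib Require Import Reals Lra Psatz.
Open Scope R_scope.

(* Near a simple root x0 of g, the mean value theorem writes g(x) = g'(xi) (x - x0).
   The error of an inexact Newton step x - G/G' - x0 is then
   [(x - x0)(G' - g'(x)) + (x - x0)(g'(x) - g'(xi)) + (g(x) - G)] / G',
   and when G, G' have relative errors c < 1/3 and g' varies little near x0 this is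
   at most a fixed fraction rho < 1 of |x - x0|: the iterates converge geometrically.
   For the theorem, c = eta/3 (the two error bounds of size eta/6 add up).
   Since |F_n| = O(|p_n - pstar|), also F_{n,k} - f_k(p_n) -> 0, so
   F_{n,k} -> f_k(pstar) and u_n -> u*. *)

(* Contraction factor of one inexact Newton step when [c] bounds the relative
   errors of the residual and of the derivative, and [k] the relative variation
   of the derivative near the root. *)
Definition newton_rate (c k : R) : R :=
  c + (2 * k + c * (1 + k) / (1 - c)) * (1 + c) / (1 - k).

Lemma Rabs_rel_err_lower x y c :
  Rabs (x - y) <= c * Rabs x -> (1 - c) * Rabs x <= Rabs y.
Proof.
intros h. pose proof (Rabs_triang (x - y) y).
replace (x - y + y) with x in H by ring. lra.
Qed.

Lemma Rabs_rel_err_upper x y c :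
  Rabs (x - y) <= c * Rabs y -> Rabs x <= (1 + c) * Rabs y.
Proof.
intros h. pose proof (Rabs_triang (x - y) y).
replace (x - y + y) with x in H by ring. lra.
Qed.

Lemma Rle_div_r_of_mult a b m : 0 < m -> m * a <= b -> a <= b / m.
Proof.
intros Hm H. apply (Rmult_le_reg_l m); [exact Hm|].
replace (m * (b / m)) with b by (field; lra). exact H.
Qed.

Lemma residual_bound c k e G gp gxi D :
  c < 1 -> Rabs (G - gp) <= c * Rabs G -> gp = gxi * e ->
  Rabs (gxi - D) <= k * Rabs D ->
  Rabs G <= (1 + k) * Rabs D * Rabs e / (1 - c).
Proof.
intros c1 hG -> hxi.
apply Rle_div_r_of_mult; [lra|].
apply Rle_trans with (1 := Rabs_rel_err_lower _ _ _ hG).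
rewrite Rabs_mult. apply Rmult_le_compat_r; [apply Rabs_pos|].
exact (Rabs_rel_err_upper _ _ _ hxi).
Qed.

Lemma derivative_scale_bound c k G' gp' D :
  k < 1 -> Rabs (G' - gp') <= c * Rabs G' -> Rabs (gp' - D) <= k * Rabs D ->
  Rabs D <= (1 + c) * Rabs G' / (1 - k).
Proof.
intros k1 hd hp'.
apply Rle_div_r_of_mult; [lra|].
apply Rle_trans with (Rabs gp').
- apply Rabs_rel_err_lower. rewrite Rabs_minus_sym. exact hp'.
- apply Rabs_rel_err_upper. rewrite Rabs_minus_sym. exact hd.
Qed.

Lemma inexact_newton_step c k e G G' gp gp' gxi D :
  0 <= c < 1 -> 0 <= k < 1 -> G' <> 0 ->
  Rabs (G - gp) <= c * Rabs G -> Rabs (G' - gp') <= c * Rabs G' ->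
  gp = gxi * e ->
  Rabs (gp' - D) <= k * Rabs D -> Rabs (gxi - D) <= k * Rabs D ->
  Rabs (e - G / G') <= newton_rate c k * Rabs e.
Proof.
intros hc hk hG' hG hd hgp hp' hxi.
assert (hGbd := residual_bound c k e G gp gxi D (proj2 hc) hG hgp hxi).
assert (hDbd := derivative_scale_bound c k G' gp' D (proj2 hk) hd hp').
assert (hdiff : Rabs (gp' - gxi) <= 2 * k * Rabs D).
{ replace (gp' - gxi) with ((gp' - D) + (D - gxi)) by ring.
  pose proof (Rabs_triang (gp' - D) (D - gxi)). rewrite (Rabs_minus_sym D gxi) in H. lra. }
assert (hnum : Rabs (e - G / G') * Rabs G'
               <= c * Rabs e * Rabs G' + 2 * k * Rabs D * Rabs e + c * Rabs G).
{ replace (e - G / G') with ((e * (G' - gp') + e * (gp' - gxi) + (gp - G)) / G')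
    by (subst gp; field; exact hG').
  unfold Rdiv. rewrite Rabs_mult, Rabs_inv, Rmult_assoc, Rinv_l, Rmult_1_r
    by (apply Rabs_no_R0; exact hG').
  pose proof (Rabs_triang (e * (G' - gp') + e * (gp' - gxi)) (gp - G)).
  pose proof (Rabs_triang (e * (G' - gp')) (e * (gp' - gxi))).
  rewrite !Rabs_mult, (Rabs_minus_sym gp G) in *.
  pose proof (Rabs_pos e).
  assert (Rabs e * Rabs (G' - gp') <= Rabs e * (c * Rabs G')) by (apply Rmult_le_compat_l; lra).
  assert (Rabs e * Rabs (gp' - gxi) <= Rabs e * (2 * k * Rabs D)) by (apply Rmult_le_compat_l; lra).
  lra. }
apply (Rmult_le_reg_r (Rabs G')); [apply Rabs_pos_lt; exact hG'|].
apply Rle_trans with (1 := hnum).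
assert (hc' : 0 <= c / (1 - c)) by (apply Rmult_le_pos; [lra | left; apply Rinv_0_lt_compat; lra]).
pose proof (Rabs_pos e). pose proof (Rabs_pos D).
assert (c * Rabs G <= c / (1 - c) * ((1 + k) * Rabs D * Rabs e)).
{ replace (c / (1 - c) * ((1 + k) * Rabs D * Rabs e))
    with (c * ((1 + k) * Rabs D * Rabs e / (1 - c))) by (field; lra).
  apply Rmult_le_compat_l; lra. }
assert ((2 * k + c / (1 - c) * (1 + k)) * Rabs e * Rabs D
        <= (2 * k + c / (1 - c) * (1 + k)) * Rabs e * ((1 + c) * Rabs G' / (1 - k)))
  by (apply Rmult_le_compat_l; [apply Rmult_le_pos; nra | exact hDbd]).
replace (newton_rate c k * Rabs e * Rabs G')
  with (c * Rabs e * Rabs G' + (2 * k + c / (1 - c) * (1 + k)) * Rabs e * ((1 + c) * Rabs G' / (1 - k)))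
  by (unfold newton_rate; field; lra).
lra.
Qed.

Lemma newton_rate_bounds c : 0 < c -> 3 * c < 1 ->
  0 <= newton_rate c ((1 - 3 * c) / 16) < 1.
Proof.
intros c0 c1. unfold newton_rate.
set (k := (1 - 3 * c) / 16).
assert (hk : 0 < k < 1) by (unfold k; lra).
replace (c + (2 * k + c * (1 + k) / (1 - c)) * (1 + c) / (1 - k))
  with ((c * (1 - c) * (1 - k) + (2 * k * (1 - c) + c * (1 + k)) * (1 + c))
        / ((1 - c) * (1 - k))) by (field; lra).
split.
- apply Rmult_le_pos; [nra | left; apply Rinv_0_lt_compat; nra].
- apply (Rmult_lt_reg_r ((1 - c) * (1 - k))); [nra|].
  unfold Rdiv; rewrite Rmult_assoc, Rinv_l, Rmult_1_r by nra.
  unfold k. nra.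
Qed.

Lemma Un_cv_dominated (a b : nat -> R) la lb K : 0 <= K ->
  (forall n, Rabs (a n - la) <= K * Rabs (b n - lb)) -> Un_cv b lb -> Un_cv a la.
Proof.
intros HK Hab Hb eps Heps.
destruct (Hb (eps / (K + 1))) as [N HN]; [apply Rdiv_lt_0_compat; lra|].
exists N. intros n Hn. specialize (HN n Hn). unfold R_dist in *.
assert (K * Rabs (b n - lb) <= K * (eps / (K + 1))) by (apply Rmult_le_compat_l; lra).
assert (K * (eps / (K + 1)) < eps).
{ apply (Rmult_lt_reg_r (K + 1)); [lra|].
  replace (K * (eps / (K + 1)) * (K + 1)) with (K * eps) by (field; lra). nra. }
specialize (Hab n). lra.
Qed.

Lemma Un_cv_geometric (x : nat -> R) l rho R : 0 <= rho < 1 -> 0 <= R ->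
  (forall n, Rabs (x n - l) <= rho ^ n * R) -> Un_cv x l.
Proof.
intros Hrho HR Hx.
apply (Un_cv_dominated x (fun n => rho ^ n) l 0 R HR).
- intros n. rewrite Rminus_0_r, (Rabs_right (rho ^ n)), Rmult_comm by (apply Rle_ge, pow_le; lra).
  apply Hx.
- intros e He. destruct (pow_lt_1_zero rho ltac:(rewrite Rabs_right; lra) e He) as [N HN].
  exists N. intros n Hn. unfold R_dist. rewrite Rminus_0_r. exact (HN n Hn).
Qed.

Lemma pow_le_1 x n : 0 <= x <= 1 -> x ^ n <= 1.
Proof. intros Hx. rewrite <- (pow1 n). apply pow_incr. lra. Qed.

Lemma contraction_geometric (a : nat -> R) rho R : 0 <= rho <= 1 -> 0 <= R ->
  a 0%nat <= R -> (forall n, a n <= R -> a (S n) <= rho * a n) ->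
  forall n, a n <= rho ^ n * R.
Proof.
intros Hrho HR H0 Hstep. induction n as [|n IH]; simpl; [lra|].
assert (rho ^ n * R <= R) by (pose proof (pow_le_1 rho n Hrho); nra).
assert (a (S n) <= rho * a n) by (apply Hstep; lra).
nra.
Qed.

Lemma MVT_abs g g' a x :
  (forall y, Rabs (y - a) <= Rabs (x - a) -> derivable_pt_lim g y (g' y)) ->
  exists xi, Rabs (xi - a) <= Rabs (x - a) /\ g x - g a = g' xi * (x - a).
Proof.
intros Hder.
destruct (total_order_T x a) as [[Hlt | ->] | Hgt].
- destruct (MVT_cor2 g g' x a Hlt) as [xi [E Hxi]].
  { intros y Hy. apply Hder. rewrite !Rabs_left1 by lra. lra. }
  exists xi. split; [rewrite !Rabs_left1 by lra; lra | lra].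
- exists a. split; [lra | ring].
- destruct (MVT_cor2 g g' a x Hgt) as [xi [E Hxi]].
  { intros y Hy. apply Hder. rewrite !Rabs_right by lra. lra. }
  exists xi. split; [rewrite !Rabs_right by lra; lra | lra].
Qed.

Lemma continuity_pt_near h x0 eps : continuity_pt h x0 -> 0 < eps ->
  exists r, 0 < r /\ forall x, Rabs (x - x0) < r -> Rabs (h x - h x0) <= eps.
Proof.
intros Hh Heps. destruct (Hh eps Heps) as [r [Hr Hx]].
exists r. split; [exact Hr|]. intros x Hxr.
destruct (Req_dec x x0) as [-> | Hne].
- rewrite Rminus_diag, Rabs_R0. lra.
- left. apply (Hx x). repeat split; auto.
Qed.

Lemma C1_on_shifted_sum I fl fr fl' fr' a b :
  C1_on I fl fl' -> C1_on I fr fr' ->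
  C1_on I (fun x => fl x + fr x + a - b) (fun x => fl' x + fr' x).
Proof.
intros Hl Hr x Hx. destruct (Hl x Hx) as [Dl Cl]. destruct (Hr x Hx) as [Dr Cr].
split.
- replace (fl' x + fr' x) with (fl' x + fr' x + 0 - 0) by ring.
  apply (derivable_pt_lim_minus (fun y => fl y + fr y + a) (fun _ => b));
    [apply (derivable_pt_lim_plus (fun y => fl y + fr y) (fun _ => a)) |];
    [apply (derivable_pt_lim_plus fl fr) | apply derivable_pt_lim_const ..]; assumption.
- exact (continuity_pt_plus fl' fr' x Cl Cr).
Qed.

Lemma Un_cv_of_approx (F G x : nat -> R) f l a :
  continuity_pt f l -> Un_cv x l -> Un_cv G 0 -> 0 <= a ->
  (forall n, Rabs (F n - f (x n)) <= a * Rabs (G n)) -> Un_cv F (f l).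
Proof.
intros Hf Hx HG Ha HF.
assert (Herr : Un_cv (fun n => F n - f (x n)) 0).
{ apply (Un_cv_dominated _ G 0 0 a Ha); [|exact HG].
  intros n. rewrite !Rminus_0_r. apply HF. }
pose proof (CV_plus _ _ _ _ Herr (continuity_seq f x l Hf Hx)) as Hsum.
rewrite Rplus_0_l in Hsum.
intros e He. destruct (Hsum e He) as [N HN]. exists N. intros n Hn.
replace (F n) with (F n - f (x n) + f (x n)) by ring. exact (HN n Hn).
Qed.

Lemma Rabs_sum_err_le a b x y t :
  Rabs (a - x) <= t -> Rabs (b - y) <= t -> Rabs (a + b - (x + y)) <= 2 * t.
Proof.
intros Ha Hb. replace (a + b - (x + y)) with ((a - x) + (b - y)) by ring.
pose proof (Rabs_triang (a - x) (b - y)). lra.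
Qed.

Lemma C1_on_continuity_pt I f f' x : C1_on I f f' -> I x -> continuity_pt f x.
Proof.
intros Hf Hx. apply derivable_continuous_pt. exists (f' x). exact (proj1 (Hf x Hx)).
Qed.

Lemma Un_cv_half_diff (A B : nat -> R) la lb s :
  Un_cv A la -> Un_cv B lb ->
  Un_cv (fun n => / 2 * (s + B n - A n)) (/ 2 * (s + lb - la)).
Proof.
intros HA HB.
apply (Un_cv_dominated _ _ _ _ (/ 2) ltac:(lra)) with (2 := CV_minus _ _ _ _ HB HA).
intros n.
replace (/ 2 * (s + B n - A n) - / 2 * (s + lb - la))
  with (/ 2 * ((B n - A n) - (lb - la))) by ring.
rewrite Rabs_mult, (Rabs_right (/ 2)) by lra. lra.
Qed.

Section InexactNewton.

Variables (I : R -> Prop) (g g' : R -> R) (x0 c : R).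
Hypothesis HI : exists d, 0 < d /\ forall y, Rabs (y - x0) < d -> I y.
Hypothesis Hg : C1_on I g g'.
Hypothesis Hroot : g x0 = 0.
Hypothesis Hg'0 : g' x0 <> 0.
Hypothesis Hc : 0 < c /\ 3 * c < 1.

(* Any k > 0 with [newton_rate c k < 1] would do. *)
Let k := (1 - 3 * c) / 16.
Let K := (1 + k) * Rabs (g' x0) / (1 - c).

Lemma newton_radius : exists r, 0 < r /\
  forall x, Rabs (x - x0) < r -> I x /\ Rabs (g' x - g' x0) <= k * Rabs (g' x0).
Proof.
destruct HI as [d [Hd HdI]].
assert (Hx0 : I x0) by (apply HdI; rewrite Rminus_diag, Rabs_R0; exact Hd).
assert (Hk : 0 < k * Rabs (g' x0)).
{ apply Rmult_lt_0_compat; [unfold k; lra | apply Rabs_pos_lt; exact Hg'0]. }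
destruct (continuity_pt_near g' x0 _ (proj2 (Hg x0 Hx0)) Hk) as [a [Ha Hga]].
exists (Rmin d a). split; [apply Rmin_glb_lt; assumption|].
intros x Hx. split.
- apply HdI. pose proof (Rmin_l d a). lra.
- apply Hga. pose proof (Rmin_r d a). lra.
Qed.

Lemma newton_step_near_root r :
  (forall x, Rabs (x - x0) < r -> I x /\ Rabs (g' x - g' x0) <= k * Rabs (g' x0)) ->
  forall x G G', Rabs (x - x0) < r -> G' <> 0 ->
  Rabs (G - g x) <= c * Rabs G -> Rabs (G' - g' x) <= c * Rabs G' ->
  Rabs (x - G / G' - x0) <= newton_rate c k * Rabs (x - x0) /\
  Rabs G <= K * Rabs (x - x0).
Proof.
intros Hr x G G' Hx HG'0 HG HG'.
destruct (MVT_abs g g' x0 x) as [xi [Hxi E]].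
{ intros y Hy. apply Hg, Hr. lra. }
rewrite Hroot, Rminus_0_r in E.
assert (Hk : 0 <= k < 1) by (unfold k; lra).
split.
- replace (x - G / G' - x0) with (x - x0 - G / G') by ring.
  apply (inexact_newton_step c k (x - x0) G G' (g x) (g' x) (g' xi) (g' x0)); try lra;
    try apply Hr; lra.
- replace (K * Rabs (x - x0)) with ((1 + k) * Rabs (g' x0) * Rabs (x - x0) / (1 - c))
    by (unfold K; field; lra).
  apply (residual_bound c k (x - x0) G (g x) (g' xi) (g' x0)); try lra.
  apply Hr. lra.
Qed.

Theorem inexact_newton_local_convergence : exists r, 0 < r /\
  forall p G G' : nat -> R,
    (forall n, G' n <> 0) ->
    (forall n, p (S n) = p n - G n / G' n) ->
    Rabs (p 0%nat - x0) <= r ->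
    (forall n, I (p n) ->
       Rabs (G n - g (p n)) <= c * Rabs (G n) /\
       Rabs (G' n - g' (p n)) <= c * Rabs (G' n)) ->
    (forall n, I (p n)) /\ Un_cv p x0 /\ Un_cv G 0.
Proof.
destruct newton_radius as [r [Hr Hball]].
exists (r / 2). split; [lra|].
intros p G G' HG'0 Hrec Hp0 Happrox.
assert (Hrate : 0 <= newton_rate c k < 1) by (apply newton_rate_bounds; apply Hc).
assert (Hnear : forall n, Rabs (p n - x0) < r ->
  Rabs (p (S n) - x0) <= newton_rate c k * Rabs (p n - x0) /\
  Rabs (G n) <= K * Rabs (p n - x0)).
{ intros n Hn. rewrite Hrec. apply (newton_step_near_root r Hball); auto;
    apply Happrox, Hball, Hn. }
assert (Hdecay : forall n, Rabs (p n - x0) <= newton_rate c k ^ n * (r / 2)).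
{ apply contraction_geometric; try lra. intros n Hn. apply Hnear. lra. }
assert (Hin : forall n, Rabs (p n - x0) < r).
{ intros n. pose proof (Hdecay n). pose proof (pow_le_1 (newton_rate c k) n). nra. }
assert (Hpcv : Un_cv p x0) by exact (Un_cv_geometric p x0 _ (r / 2) Hrate ltac:(lra) Hdecay).
split; [intros n; apply Hball, Hin|]. split; [exact Hpcv|].
apply (Un_cv_dominated G p 0 x0 K); [| intros n; rewrite Rminus_0_r; apply Hnear, Hin | exact Hpcv].
unfold K, k. apply Rmult_le_pos; [apply Rmult_le_pos; [lra | apply Rabs_pos] |].
left. apply Rinv_0_lt_compat. lra.
Qed.

End InexactNewton.

Theorem theorem2
  (I : R -> Prop) (fl fr fl' fr' : R -> R) (ul ur pstar eta : R)
  (HI : is_open_interval I)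
  (Hfl : C1_on I fl fl') (Hfr : C1_on I fr fr')
  (Hp : I pstar)
  (Hf0 : fl pstar + fr pstar + ur - ul = 0)
  (Hf'0 : fl' pstar + fr' pstar <> 0)
  (Heta : 0 < eta < 1) :
  exists eps, 0 < eps /\
    forall (p Fl Fr Fl' Fr' : nat -> R),
      (forall n, Fl' n + Fr' n <> 0) ->
      (forall n, p (S n) = p n - (Fl n + Fr n + ur - ul) / (Fl' n + Fr' n)) ->
      Rabs (p 0%nat - pstar) <= eps ->
      (exists M, forall n, Rabs (Fl' n + Fr' n) <= M) ->
      (forall n, I (p n) ->
         Rabs (Fl n - fl (p n)) <= eta / 6 * Rabs (Fl n + Fr n + ur - ul) /\
         Rabs (Fr n - fr (p n)) <= eta / 6 * Rabs (Fl n + Fr n + ur - ul) /\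
         Rabs (Fl' n - fl' (p n)) <= eta / 6 * Rabs (Fl' n + Fr' n) /\
         Rabs (Fr' n - fr' (p n)) <= eta / 6 * Rabs (Fl' n + Fr' n)) ->
      Un_cv p pstar /\
      Un_cv (fun n => / 2 * (ul + ur + Fr n - Fl n))
            (/ 2 * (ul + ur + fr pstar - fl pstar)).
Proof.
destruct (inexact_newton_local_convergence I (fun x => fl x + fr x + ur - ul)
            (fun x => fl' x + fr' x) pstar (eta / 3) (proj2 HI pstar Hp)
            (C1_on_shifted_sum I fl fr fl' fr' ur ul Hfl Hfr) Hf0 Hf'0 ltac:(lra))
  as [eps [Heps Hnewton]].
exists eps. split; [exact Heps|].
intros p Fl Fr Fl' Fr' HF'0 Hrec Hp0 _ Hbd.
destruct (Hnewton p (fun n => Fl n + Fr n + ur - ul) (fun n => Fl' n + Fr' n) HF'0 Hrec Hp0)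
  as [Hin [Hpcv HFcv]].
{ intros n Hn. destruct (Hbd n Hn) as [Hl [Hr [Hl' Hr']]]. split.
  - replace (Fl n + Fr n + ur - ul - (fl (p n) + fr (p n) + ur - ul))
      with (Fl n + Fr n - (fl (p n) + fr (p n))) by ring.
    pose proof (Rabs_sum_err_le _ _ _ _ _ Hl Hr). lra.
  - pose proof (Rabs_sum_err_le _ _ _ _ _ Hl' Hr'). lra. }
split; [exact Hpcv|].
apply Un_cv_half_diff.
- apply (Un_cv_of_approx Fl _ p fl pstar (eta / 6) (C1_on_continuity_pt I fl fl' pstar Hfl Hp)
           Hpcv HFcv); [lra|].
  intros n. apply (Hbd n (Hin n)).
- apply (Un_cv_of_approx Fr _ p fr pstar (eta / 6) (C1_on_continuity_pt I fr fr' pstar Hfr Hp)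
           Hpcv HFcv); [lra|].
  intros n. apply (Hbd n (Hin n)).
Qed.
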